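(* For any theory $\Sigma$ and any formula $A \Rightarrow B$, the following are equivalent: (1) $\Sigma \models A \Rightarrow B$; (2) $[A]_\Sigma \models A \Rightarrow B$; (3) $B \subseteq [A]_\Sigma$.
   Context: $Y$ is a non-empty finite set of attributes and $\mathcal{T}_Y = \{y^i \mid y \in Y, i \in \mathbb{Z}\}$. For $M \subseteq \mathcal{T}_Y$ and $j \in \mathbb{Z}$, $M + j = \{y^{i+j} \mid y^i \in M\}$. A formula is $A \Rightarrow B$ with $A,B$ finite subsets of $\mathcal{T}_Y$; $M \models A \Rightarrow B$ means that for every $i \in \mathbb{Z}$, $A+i \subseteq M$ implies $B+i \subseteq M$. For a theory $\Sigma$, $\mathrm{Mod}(\Sigma)$ is the set of all $M \subseteq \mathcal{T}_Y$ in which all formulas of $\Sigma$ are true; $\Sigma \models A \Rightarrow B$ means $M \models A \Rightarrow B$ for all $M \in \mathrm{Mod}(\Sigma)$; $[M]_\Sigma = \bigcap\{N \in \mathrm{Mod}(\Sigma) \mid M \subseteq N\}$. *)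

From mathcomp Require Import all_boot all_algebra.
Set Implicit Arguments. Unset Strict Implicit. Unset Printing Implicit Defensive.
Local Open Scope ring_scope.

(* Attribute set Y : a non-empty finite type. Terms y^i are pairs (y, i). *)
Definition term (Y : finType) := (Y * int)%type.

Definition tset (Y : finType) := term Y -> Prop.

Definition fterms (Y : finType) := seq (term Y).

Definition shift (Y : finType) (j : int) (t : term Y) : term Y := (t.1, t.2 + j).

Definition fsubset_shift (Y : finType) (A : fterms Y) (i : int) (M : tset Y) : Prop :=
  forall t, t \in A -> M (shift i t).

Record formula (Y : finType) := Formula { lhs : fterms Y; rhs : fterms Y }.

Definition holds (Y : finType) (M : tset Y) (f : formula Y) : Prop :=
  forall i : int, fsubset_shift (lhs f) i M -> fsubset_shift (rhs f) i M.

Definition theory (Y : finType) := formula Y -> Prop.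

Definition Models (Y : finType) (Sigma : theory Y) (M : tset Y) : Prop :=
  forall f, Sigma f -> holds M f.

Definition entails (Y : finType) (Sigma : theory Y) (f : formula Y) : Prop :=
  forall M, Models Sigma M -> holds M f.

Definition theory_closure (Y : finType) (Sigma : theory Y) (M : tset Y) : tset Y :=
  fun t => forall N, Models Sigma N -> (forall s, M s -> N s) -> N t.

Definition fset_of (Y : finType) (A : fterms Y) : tset Y := fun t => t \in A.

From mathcomp Require Import all_boot all_algebra.
Import GRing.Theory.
Local Open Scope ring_scope.

(* [A]_Sigma is itself a model, so (1) gives (2); instantiating (2) at the
   shift 0 gives (3).  For (3) => (1), note that models of Sigma are closed
   under shifts: if A + i lies in a model M, then A lies in the model M - i,
   hence so does its closure, hence B, i.e. B + i lies in M. *)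

Section Shift.

Variable Y : finType.

Lemma shift0 (t : term Y) : shift 0 t = t.
Proof. by case: t => y k; rewrite /shift /= addr0. Qed.

Lemma shiftD (i j : int) (t : term Y) : shift i (shift j t) = shift (j + i) t.
Proof. by case: t => y k; rewrite /shift /= addrA. Qed.

Lemma fsubset_shift0 (A : fterms Y) (M : tset Y) :
  fsubset_shift A 0 M <-> (forall t, t \in A -> M t).
Proof. by split=> HA t /HA; rewrite shift0. Qed.

End Shift.

Section Closure.

Variables (Y : finType) (Sigma : theory Y).

Lemma Models_shift (M : tset Y) (i : int) :
  Models Sigma M -> Models Sigma (fun t => M (shift i t)).
Proof.
move=> HM f Hf j HA t Ht; rewrite /= shiftD.
apply: (HM f Hf (j + i)) => // s /HA.
by rewrite /= shiftD.
Qed.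

Lemma Models_closure (M : tset Y) : Models Sigma (theory_closure Sigma M).
Proof.
move=> f Hf i HA t Ht N HN HMN.
by apply: (HN f Hf i) => // s /HA; apply.
Qed.

Lemma closure_ext (M : tset Y) t : M t -> theory_closure Sigma M t.
Proof. by move=> Mt N _; apply. Qed.

Lemma entails_of_closure (A B : fterms Y) :
  (forall t, t \in B -> theory_closure Sigma (fset_of A) t) ->
  entails Sigma (Formula A B).
Proof. by move=> HB M HM i HA t /HB /(_ _ (Models_shift M i HM)); apply. Qed.

End Closure.

Theorem theorem4 (Y : finType) (HY : (0 < #|Y|)%N) (Sigma : theory Y) (A B : fterms Y) :
  (entails Sigma (Formula A B) <-> holds (theory_closure Sigma (fset_of A)) (Formula A B)) /\
  (holds (theory_closure Sigma (fset_of A)) (Formula A B) <->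
     (forall t, t \in B -> theory_closure Sigma (fset_of A) t)).
Proof.
set C := theory_closure Sigma (fset_of A).
have h12 : entails Sigma (Formula A B) -> holds C (Formula A B).
  by apply; apply: Models_closure.
have h23 : holds C (Formula A B) -> forall t, t \in B -> C t.
  move=> H; apply/fsubset_shift0; apply: H.
  by apply/fsubset_shift0 => t; apply: closure_ext.
have h31 := @entails_of_closure Y Sigma A B.
split; split=> H.
- exact: h12.
- exact: h31 (h23 H).
- exact: h23.
- exact: h12 (h31 H).
Qed.
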